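(* Let $G$ be a finite simple graph with no induced banner, and let $H$ be a homogeneous set of $G$. Then $G$ contains no induced odd hole if and only if both $G[H]$ and $G[(V(G)\setminus H) \cup \{h\}]$ contain no induced odd hole, for any vertex $h \in H$.
   Context: A hole is a chordless (induced) cycle with at least four vertices; it is odd if it has an odd number of vertices. A banner is the graph consisting of a hole on four vertices together with one additional vertex adjacent to exactly one vertex of that hole. A set $H \subseteq V(G)$ is homogeneous if $2 \leq |H| < |V(G)|$ and every vertex of $V(G)\setminus H$ is adjacent either to all of $H$ or to none of $H$. *)

(* A finite simple graph is a finType T with a symmetric,
   irreflexive adjacency relation e : rel T. *)
From mathcomp Require Import all_boot.
Local Open Scope nat_scope.
Set Implicit Arguments. Unset Strict Implicit. Unset Printing Implicit Defensive.

Section Graphs.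
Variables (T : finType) (e : rel T).

(* f : 'I_n -> T enumerates, in cyclic order, the vertices of a hole of the
   induced subgraph G[S]: n >= 4 distinct vertices of S, where f i and f j are
   adjacent iff they are cyclically consecutive (chordless cycle). *)
Definition is_hole (S : {set T}) (n : nat) (f : 'I_n -> T) : Prop :=
  (4 <= n) /\ injective f /\ (forall i, f i \in S) /\
  (forall i j : 'I_n,
     e (f i) (f j) = ((i.+1 %% n == j) || (j.+1 %% n == i))).

Definition no_odd_hole (S : {set T}) : Prop :=
  ~ exists (n : nat) (f : 'I_n -> T), odd n /\ @is_hole S n f.

Definition has_induced_banner : Prop :=
  exists a b c d x : T,
    [/\ uniq [:: a; b; c; d; x],
        [&& e a b, e b c, e c d, e d a, ~~ e a c & ~~ e b d] &
        [&& e x a, ~~ e x b, ~~ e x c & ~~ e x d]].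

Definition homogeneous (H : {set T}) : Prop :=
  2 <= #|H| < #|T| /\
  forall v, v \notin H -> (forall h, h \in H -> e v h) \/ (forall h, h \in H -> ~~ e v h).

End Graphs.

(* If an odd hole meets a homogeneous set H in at least two vertices and also
   leaves it, then walking along the hole there is a vertex p outside H
   followed by a vertex s of H.  By homogeneity p is adjacent to all of H, so
   the vertex t after s lies outside H (it is not adjacent to p), and then t
   is adjacent to all of H too.  A second hole vertex q in H is therefore a
   common neighbour of p and t other than s, which only a hole of length 4
   has.  So an odd hole lies inside H or meets H in at most one vertex, and in
   the latter case swapping that vertex for h gives an odd hole of
   G[(V(G) \ H) ∪ {h}]. *)
From mathcomp Require Import all_boot.

Set Implicit Arguments.
Unset Strict Implicit.
Unset Printing Implicit Defensive.

Lemma iter_ordS n (i : 'I_n) d : val (iter d (@ordS n) i) = (i + d) %% n.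
Proof.
elim: d => [|d IHd] /=; first by rewrite addn0 modn_small.
by rewrite IHd -addn1 modnDml addn1 addnS.
Qed.

Lemma iter_ordS_neq n (i : 'I_n) d : 0 < d < n -> iter d (@ordS n) i != i.
Proof.
case/andP=> d_gt0 d_lt_n; apply/eqP=> /(congr1 val).
rewrite iter_ordS -[X in _ = X](@modn_small i n) // -{2}[val i]addn0.
move/eqP; rewrite eqn_modDl modn_small // mod0n => /eqP d0.
by rewrite d0 in d_gt0.
Qed.

Lemma ordS_closed n (P : pred 'I_n) i :
  P i -> (forall j, P j -> P (ordS j)) -> forall j, P j.
Proof.
move=> Pi P_ordS j.
have P_iter d : P (iter d (@ordS n) i) by elim: d => //= d; apply: P_ordS.
suff -> : j = iter (j + n - i) (@ordS n) i by [].
apply: val_inj; rewrite iter_ordS subnKC; last first.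
  by rewrite (leq_trans (ltnW (ltn_ord i))) ?leq_addl.
by rewrite modnDr modn_small.
Qed.

Lemma ordS_boundary n (P : pred 'I_n) i j :
  P i -> ~~ P j -> exists k, P k && ~~ P (ordS k).
Proof.
move=> Pi nPj; apply/existsP; apply: contraR nPj => /existsPn no_exit.
apply: (ordS_closed Pi) => k Pk.
by move: (no_exit k); rewrite Pk negbK.
Qed.

Section HoleAdjacency.

Variables (T : finType) (e : rel T) (n : nat) (f : 'I_n -> T).

(* The adjacency clause of [is_hole]: [i.+1 %% n == j] is [ordS i == j]. *)
Hypothesis hole_adj : forall i j, e (f i) (f j) = (ordS i == j) || (ordS j == i).

Lemma hole_adjS i : e (f i) (f (ordS i)).
Proof. by rewrite hole_adj eqxx. Qed.

Lemma hole_nadjSS i : 4 <= n -> ~~ e (f i) (f (ordS (ordS i))).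
Proof.
move=> n_ge4; rewrite hole_adj (inj_eq (@ordS_inj n)) eq_sym; apply/norP; split.
  exact: (@iter_ordS_neq n i 1 (ltnW (ltnW n_ge4))).
exact: (@iter_ordS_neq n i 3 n_ge4).
Qed.

Lemma hole_common_nbr p q :
  5 <= n -> e (f p) (f q) -> e (f (ordS (ordS p))) (f q) -> q = ordS p.
Proof.
move=> n_ge5; rewrite !hole_adj => /orP[/eqP -> // | /eqP qS_p].
case/orP=> [/eqP p3_q | /eqP qS_p2].
  by have := @iter_ordS_neq n p 4 n_ge5; rewrite /= p3_q qS_p eqxx.
have := @iter_ordS_neq n p 2 (ltnW (ltnW n_ge5)).
by rewrite /= -qS_p2 qS_p eqxx.
Qed.

End HoleAdjacency.

Lemma no_odd_hole_sub (T : finType) (e : rel T) (S1 S2 : {set T}) :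
  S1 \subset S2 -> no_odd_hole e S2 -> no_odd_hole e S1.
Proof.
move=> sS12 noS2 [n [f [odd_n [n_ge4 [inj_f [f_S1 adj_f]]]]]].
apply: noS2; exists n, f; split=> //; do 3 split=> //.
by move=> i; apply: subsetP sS12 _ (f_S1 i).
Qed.

Section HomogeneousSet.

Variables (T : finType) (e : rel T) (H : {set T}).

Hypothesis homH :
  forall v, v \notin H -> {in H, forall x, e v x} \/ {in H, forall x, ~~ e v x}.

Lemma homog_adj_eq x y v : x \in H -> y \in H -> v \notin H -> e v x = e v y.
Proof.
move=> xH yH /homH[v_all | v_none].
  by rewrite !v_all.
by rewrite (negbTE (v_none x xH)) (negbTE (v_none y yH)).
Qed.

Lemma long_hole_in_homog n (f : 'I_n -> T) i j :
  5 <= n -> (forall i j, e (f i) (f j) = (ordS i == j) || (ordS j == i)) ->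
  i != j -> f i \in H -> f j \in H -> forall k, f k \in H.
Proof.
move=> n_ge5 adj ij fiH fjH k; apply: contraT => fkH.
have [p /andP[fpH]] :
    exists p, (f p \notin H) && ~~ (f (ordS p) \notin H).
  by apply: (@ordS_boundary n (fun k => f k \notin H) k i fkH); rewrite /= negbK.
rewrite negbK => fsH.
have p_nbr x : x \in H -> e (f p) x.
  by move=> xH; rewrite (homog_adj_eq xH fsH fpH) hole_adjS.
have [q fqH q_neq] : exists2 q, f q \in H & q != ordS p.
  case: (eqVneq i (ordS p)) => [i_sp | ]; last by exists i.
  by exists j; rewrite // -i_sp eq_sym.
have [ftH | ftH] := boolP (f (ordS (ordS p)) \in H).
  by have := hole_nadjSS adj p (ltnW n_ge5); rewrite p_nbr.
have t_nbr : e (f (ordS (ordS p))) (f q).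
  by rewrite (homog_adj_eq fqH fsH ftH) adj eqxx orbT.
by move: q_neq; rewrite (hole_common_nbr adj n_ge5 (p_nbr _ fqH) t_nbr) eqxx.
Qed.

Lemma long_hole_in_homog_or_once n (f : 'I_n -> T) :
  5 <= n -> (forall i j, e (f i) (f j) = (ordS i == j) || (ordS j == i)) ->
  (forall k, f k \in H) \/ (forall i j, f i \in H -> f j \in H -> i = j).
Proof.
move=> n_ge5 adj; have [f_H | /forallPn[k fkH]] := boolP [forall k, f k \in H].
  by left; apply/forallP.
right=> i j fiH fjH; apply/eqP; apply: contraT => ij.
by rewrite (long_hole_in_homog n_ge5 adj ij fiH fjH k) in fkH.
Qed.

Variable h : T.
Hypotheses (e_sym : symmetric e) (e_irr : irreflexive e) (hH : h \in H).

Lemma hole_contract S n (f : 'I_n -> T) :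
  is_hole e S f -> (forall i j, f i \in H -> f j \in H -> i = j) ->
  is_hole e (h |: ~: H) (fun i => if f i \in H then h else f i).
Proof.
move=> [n_ge4 [inj_f [_ adj]]] H_once; do !split => //.
- move=> i j; have [fiH | fiH] := boolP (f i \in H);
    have [fjH | fjH] := boolP (f j \in H) => //.
  + by move=> _; apply: H_once.
  + by move=> h_fj; rewrite -h_fj hH in fjH.
  + by move=> fi_h; rewrite fi_h hH in fiH.
  + exact: inj_f.
- by move=> i; case: ifP => fiH; rewrite !inE ?eqxx ?fiH ?orbT.
move=> i j; rewrite -adj.
have [fiH | fiH] := boolP (f i \in H); have [fjH | fjH] := boolP (f j \in H) => //.
- by rewrite (H_once _ _ fiH fjH) !e_irr.
- by rewrite e_sym [e (f i) _]e_sym (homog_adj_eq fiH hH fjH).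
- exact: homog_adj_eq.
Qed.

End HomogeneousSet.

Theorem mainTheorem4 (T : finType) (e : rel T)
    (e_sym : symmetric e) (e_irr : irreflexive e)
    (H : {set T}) :
  ~ has_induced_banner e ->
  homogeneous e H ->
  forall h, h \in H ->
    (no_odd_hole e [set: T] <->
     (no_odd_hole e H /\ no_odd_hole e (h |: ~: H))).
Proof.
move=> _ [_ homH] h hH; split.
  by move=> noT; split; apply: no_odd_hole_sub noT; apply: subsetT.
move=> [noH noR] [n [f [odd_n hole_f]]].
have [n_ge4 [_ [_ adj]]] := hole_f.
have n_ge5 : 5 <= n by case: n odd_n n_ge4 {f hole_f adj} => [|[|[|[|[]]]]].
have [inH | H_once] := long_hole_in_homog_or_once homH n_ge5 adj.
- by apply: noH; exists n, f; have [? [? [_ ?]]] := hole_f; do !split.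
- apply: noR; exists n, (fun i => if f i \in H then h else f i); split=> //.
  exact: hole_contract hole_f H_once.
Qed.
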